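(* Let $f$ be a non-imposing ABC voting rule that satisfies anonymity, neutrality, and consistency. Then there is a function $\hat g:\mathbb Q^{|\mathcal A|}\to 2^{\mathcal W_k}\setminus\{\emptyset\}$ that is neutral (i.e., $\hat g(\tau(v))=\{\tau(W):W\in\hat g(v)\}$ for all $v\in\mathbb Q^{|\mathcal A|}$ and all permutations $\tau$ of $\mathcal C$), consistent (i.e., $\hat g(v+v')=\hat g(v)\cap\hat g(v')$ for all $v,v'\in\mathbb Q^{|\mathcal A|}$ with $\hat g(v)\cap\hat g(v')\neq\emptyset$), and satisfies $\hat g(v(A))=f(A)$ for all profiles $A\in\mathcal A^*$.
   Context: Let $\mathcal C=\{c_1,\dots,c_m\}$ be a set of $m\ge 2$ candidates and $\mathbb N=\{1,2,\dots\}$ the set of potential voters. An approval ballot is a non-empty subset of $\mathcal C$; $\mathcal A$ is the set of all ballots. A profile is a map $A:N_A\to\mathcal A$ for a non-empty finite electorate $N_A\subseteq\mathbb N$; $\mathcal A^*$ is the set of all profiles; for disjoint electorates, $A+A'$ denotes the union profile. Fix $k\in\{1,\dots,m-1\}$; $\mathcal W_k$ is the set of $k$-element subsets of $\mathcal C$. An ABC voting rule is a map $f:\mathcal A^*\to 2^{\mathcal W_k}\setminus\{\emptyset\}$. Anonymity: $f(A)$ is invariant under renaming voters. Neutrality: $f(\tau(A))=\{\tau(W):W\in f(A)\}$ for every permutation $\tau$ of $\mathcal C$, where $\tau(A)_i=\tau(A_i)$. Consistency: $f(A+A')=f(A)\cap f(A')$ for disjoint $A,A'$ with $f(A)\cap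 f(A')\neq\emptyset$. $f$ is non-imposing if for every $W\in\mathcal W_k$ there is a profile $A$ with $f(A)=\{W\}$. Fix a bijection $B:\{1,\dots,|\mathcal A|\}\to\mathcal A$. For a profile $A$, $v(A)\in\mathbb N_0^{|\mathcal A|}$ is the vector whose $\ell$-th entry is the number of voters in $A$ with ballot $B(\ell)$. For a permutation $\tau$ of $\mathcal C$ and a vector $v$ (real entries allowed), $\tau(v)$ is defined by $\tau(v)_{\ell_1}=v_{\ell_2}$ whenever $B(\ell_1)=\tau(B(\ell_2))$. *)

From HB Require Import structures.
From mathcomp Require Import all_boot all_order all_algebra all_fingroup.
From mathcomp Require Import finmap.
Set Implicit Arguments. Unset Strict Implicit. Unset Printing Implicit Defensive.
Import Order.TTheory GRing.Theory Num.Theory.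
Local Open Scope fset_scope.
Local Open Scope fmap_scope.

Definition ballot (m : nat) := {B : {set 'I_m} | B != set0}.

Lemma imset_perm_neq0 m (t : {perm 'I_m}) (B : {set 'I_m}) :
  B != set0 -> t @: B != set0.
Proof. by rewrite -!card_gt0 card_imset //; apply: perm_inj. Qed.

Definition bperm m (t : {perm 'I_m}) (B : ballot m) : ballot m :=
  exist _ (t @: val B) (imset_perm_neq0 t (valP B)).

(* A profile: a finite map from a non-empty finite electorate N_A of
   positive naturals (N = {1,2,...}) to ballots. *)
Definition valid_profile m (M : {fmap nat -> ballot m}) : bool :=
  (domf M != fset0) && (0 \notin domf M).

Record profile (m : nat) := Profile {
  pmap : {fmap nat -> ballot m};
  pmap_valid : valid_profile pmap }.

Definition is_committee m (k : nat) (W : {set 'I_m}) := #|W| = k.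

Definition abc_rule_out m k (X : {set {set 'I_m}}) :=
  X != set0 /\ forall W, W \in X -> is_committee k W.

Definition is_ABC_rule m k (f : profile m -> {set {set 'I_m}}) :=
  forall A, abc_rule_out k (f A).

(* Anonymity: f is invariant under renaming voters, i.e. if A' is obtained
   from A through a bijection pi : N_A' -> N_A (A'_i = A_(pi i)). *)
Definition anonymous m (f : profile m -> {set {set 'I_m}}) :=
  forall (A A' : profile m) (pi : nat -> nat),
    {in domf (pmap A') &, injective pi} ->
    (forall i, i \in domf (pmap A') -> pi i \in domf (pmap A)) ->
    (forall j, j \in domf (pmap A) -> exists2 i, i \in domf (pmap A') & pi i = j) ->
    (forall i, i \in domf (pmap A') -> (pmap A').[? i] = (pmap A).[? pi i]) ->
    f A' = f A.

Definition is_perm_profile m (t : {perm 'I_m}) (A tA : profile m) :=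
  domf (pmap tA) = domf (pmap A) /\
  forall i, (pmap tA).[? i] = omap (bperm t) (pmap A).[? i].

Definition neutral m (f : profile m -> {set {set 'I_m}}) :=
  forall (t : {perm 'I_m}) (A tA : profile m),
    is_perm_profile t A tA -> f tA = ([set t @: W | W : {set 'I_m} in f A])%SET.

Definition is_union_profile m (A A' U : profile m) :=
  [disjoint domf (pmap A) & domf (pmap A')]%fset /\
  pmap U = catf (pmap A) (pmap A').

Definition consistent m (f : profile m -> {set {set 'I_m}}) :=
  forall A A' U : profile m, is_union_profile A A' U ->
    f A :&: f A' != set0 -> f U = f A :&: f A'.

Definition non_imposing m k (f : profile m -> {set {set 'I_m}}) :=
  forall W : {set 'I_m}, is_committee k W -> exists A : profile m, f A = [set W].

(* Vectors in Q^{|A|}, indexed directly by ballots (the bijection B is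
   taken to be the identity indexing). *)
Definition qvec m := {ffun ballot m -> rat}.

Definition count_vec m (A : profile m) : qvec m :=
  [ffun B => ((count (fun i => (pmap A).[? i] == Some B) (domf (pmap A)))%:R)%R].

(* tau(v)_{tau(B)} = v_B, i.e. tau(v)_B = v_{tau^-1(B)} *)
Definition vperm m (t : {perm 'I_m}) (v : qvec m) : qvec m :=
  [ffun B => v (bperm t^-1 B)].

Definition vadd m (v v' : qvec m) : qvec m := [ffun B => (v B + v' B)%R].

From Pilot Require Import Defs.
From HB Require Import structures.
From mathcomp Require Import all_boot all_order all_algebra all_fingroup.
From mathcomp Require Import finmap.
From mathcomp Require Import zify ring.

(* By anonymity [f A] depends only on the vote counts of [A], so [f] induces a
   rule [fcount] on nonzero vectors of naturals, which inherits neutrality and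
   consistency.  Neutrality makes the outcome on a constant vector a nonempty
   permutation-invariant family of [k]-sets, hence all committees, so by
   consistency adding a positive constant vector or multiplying by a positive
   integer does not change the outcome.  A rational [v] is sent to
   [fcount (d v + c)] for any positive integers [d], [c] making [d v + c] a
   positive integral vector; this does not depend on the choice because
   [d2 (d1 v + c1) + d1 c2 = d1 (d2 v + c2) + d2 c1], and neutrality and
   consistency carry over. *)

Set Implicit Arguments. Unset Strict Implicit. Unset Printing Implicit Defensive.
Import Order.TTheory GRing.Theory Num.Theory.
Local Open Scope fset_scope.
Local Open Scope fmap_scope.
Local Notation pmap := Defs.pmap.

Section FmapOfSeq.
Variable T : Type.

Fixpoint fmap_of_seq (N : nat) (s : seq T) : {fmap nat -> T} :=
  if s is b :: s' then (fmap_of_seq N.+1 s').[N.+1 <- b] else [fmap].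

Lemma fnd_fmap_of_seq N s i :
  (fmap_of_seq N s).[? i] = if N < i then nth None (map Some s) (i - N.+1) else None.
Proof.
elim: s N => [|b s IH] N /=.
  by rewrite fnd_fmap0; case: ifP => // _; rewrite nth_nil.
rewrite fnd_set IH; case: eqP => [->|ne]; first by rewrite ltnSn subnn.
case: (ltnP N.+1 i) => h.
  by rewrite ltnW //; have -> : i - N.+1 = (i - N.+2).+1 by lia.
by have -> : (N < i) = false by lia.
Qed.

Lemma mem_domf_fmap_of_seq N s i :
  (i \in domf (fmap_of_seq N s)) = (N < i) && (i - N.+1 < size s).
Proof.
rewrite -fndSome fnd_fmap_of_seq; case: ifP => //= _.
by elim: s (i - N.+1) => [|b s IH] [|j] /=.
Qed.

Lemma fmap_of_seq_cat N s s' :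
  fmap_of_seq N (s ++ s') = catf (fmap_of_seq N s) (fmap_of_seq (N + size s) s').
Proof.
apply/fmapP => i; rewrite fnd_cat mem_domf_fmap_of_seq !fnd_fmap_of_seq.
rewrite map_cat nth_cat size_map.
case: (ltnP N i) => hi; first case: (ltnP (i - N.+1) (size s)) => h1.
- by have -> : (N + size s < i) = false by lia.
- have -> : N + size s < i by lia.
  have -> : i - N.+1 - size s = i - (N + size s).+1 by lia.
  by case: ltnP => // h2; rewrite !nth_default ?size_map.
- by have -> : (N + size s < i) = false by lia.
Qed.

Lemma fnd_fmap_of_seq_map N s (g : T -> T) i :
  (fmap_of_seq N (map g s)).[? i] = omap g (fmap_of_seq N s).[? i].
Proof.
rewrite !fnd_fmap_of_seq; case: ifP => // _.
by elim: s (i - N.+1) => [|b s IH] [|j] /=.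
Qed.
End FmapOfSeq.

Lemma count_fnd_fmap_of_seq (T : eqType) N (s : seq T) b :
  count (fun i => (fmap_of_seq N s).[? i] == Some b) (domf (fmap_of_seq N s))
  = count_mem b s.
Proof.
elim: s N => [|b' s IH] N //=.
have N1_notin : N.+1 \notin domf (fmap_of_seq N.+1 s).
  by rewrite mem_domf_fmap_of_seq ltnn.
have /seq.permP -> : perm_eq (domf (fmap_of_seq N.+1 s).[N.+1 <- b'])
                             (N.+1 :: domf (fmap_of_seq N.+1 s)).
  by apply: uniq_perm; rewrite ?fset_uniq ?cons_uniq ?N1_notin ?fset_uniq // => i;
     rewrite dom_setf !inE.
rewrite -(IH N.+1) [count _ (_ :: _)]/= fnd_set eqxx; congr addn.
apply: eq_in_count => i iin /=; rewrite fnd_set; have [ei|//] := eqVneq i N.+1.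
by rewrite ei mem_domf_fmap_of_seq ltnn in iin.
Qed.

(* Transpositions exchanging a point of W0 :\: W with one of W :\: W0 walk from
   W0 to W. *)
Lemma perm_closed_card_mem (T : finType) (X : {set {set T}}) (W0 W : {set T}) :
  (forall (t : {perm T}) V, V \in X -> t @: V \in X) ->
  W0 \in X -> #|W| = #|W0| -> W \in X.
Proof.
move=> X_closed; move Hn: #|W0 :\: W| => n.
elim: n W0 Hn => [|n IH] W0 Hn W0X cardW.
  have subW0 : W0 \subset W by rewrite -setD_eq0 -cards_eq0 Hn.
  by have /eqP <- : W0 == W by rewrite eqEcard subW0 cardW leqnn.
have [x] : exists x, x \in W0 :\: W by apply/set0Pn; rewrite -card_gt0 Hn.
have cardWD : #|W :\: W0| = #|W0 :\: W|.
  by apply/eqP; rewrite -(eqn_add2l #|W :&: W0|) cardsID setIC cardsID cardW.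
have [y] : exists y, y \in W :\: W0 by apply/set0Pn; rewrite -card_gt0 cardWD Hn.
rewrite !inE => /andP[yW0 yW] /andP[xW xW0].
apply: (IH (tperm x y @: W0)); last 2 first.
- exact: X_closed.
- by rewrite card_imset //; apply: perm_inj.
have -> : tperm x y @: W0 :\: W = (W0 :\: W) :\ x.
  apply/setP => z; rewrite (can2_imset_pre _ (tpermK x y) (tpermK x y)) !inE.
  case: tpermP => [->|->|/eqP zx /eqP zy]; first by rewrite eqxx (negbTE yW0) andbF.
    by rewrite yW andbF.
  by rewrite zx.
by move: (cardsD1 x (W0 :\: W)); rewrite Hn !inE xW xW0 add1n => -[].
Qed.

Section BallotProfiles.
Variable m : nat.
Hypothesis m_gt0 : 0 < m.

Lemma setT_ord_neq0 : [set: 'I_m] != set0.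
Proof. by rewrite -card_gt0 cardsT card_ord. Qed.

Definition full_ballot : ballot m := exist _ [set: 'I_m] setT_ord_neq0.

(* Voters are numbered N+1, N+2, ...; the junk value for the empty sequence
   is a single voter approving everybody. *)
Definition profile_seq N (s : seq (ballot m)) :=
  fmap_of_seq N (if s is [::] then [:: full_ballot] else s).

Lemma profile_seq_valid N s : valid_profile (profile_seq N s).
Proof.
have sn : (if s is [::] then [:: full_ballot] else s) != [::] by case: s.
apply/andP; split; last by rewrite mem_domf_fmap_of_seq.
apply/fset0Pn; exists N.+1.
by rewrite mem_domf_fmap_of_seq ltnSn subnn lt0n size_eq0.
Qed.

Definition profile_of_seq N s : profile m := Profile (profile_seq_valid N s).

Lemma pmap_profile_of_seq N s :
  s != [::] -> pmap (profile_of_seq N s) = fmap_of_seq N s.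
Proof. by case: s. Qed.

Definition vote_count (A : profile m) : {ffun ballot m -> nat} :=
  [ffun B => count (fun i => (pmap A).[? i] == Some B) (domf (pmap A))].

Definition ballots (A : profile m) : seq (ballot m) :=
  seq.pmap (fun i => (pmap A).[? i]) (domf (pmap A)).

Lemma map_Some_ballots A :
  map Some (ballots A) = map (fun i => (pmap A).[? i]) (domf (pmap A)).
Proof.
rewrite pmapS_filter; congr map; apply/all_filterP/allP => i iin /=.
by rewrite fndSome.
Qed.

Lemma size_ballots A : size (ballots A) = size (domf (pmap A)).
Proof. by rewrite -(size_map Some) map_Some_ballots size_map. Qed.

Lemma ballots_neq0 A : ballots A != [::].
Proof.
rewrite -size_eq0 size_ballots -[size _]/#|` domf (pmap A)| cardfs_eq0.
by case/andP: (pmap_valid A).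
Qed.

Lemma vote_countE A B : vote_count A B = count_mem B (ballots A).
Proof.
by rewrite ffunE -(count_map Some (pred1 (Some B))) map_Some_ballots count_map.
Qed.

Lemma vote_count_profile_of_seq N s B :
  s != [::] -> vote_count (profile_of_seq N s) B = count_mem B s.
Proof. by move=> sn; rewrite ffunE pmap_profile_of_seq // count_fnd_fmap_of_seq. Qed.

Lemma vote_count_gt0 A : exists B, 0 < vote_count A B.
Proof.
have := ballots_neq0 A; case e: (ballots A) => [|B s] // _.
by exists B; rewrite vote_countE e /= eqxx.
Qed.

Lemma bpermK (t : {perm 'I_m}) : cancel (bperm t) (bperm t^-1).
Proof.
move=> B; apply: val_inj => /=; rewrite -imset_comp (eq_imset _ (permK t)).
exact: imset_id.
Qed.

Lemma bpermKV (t : {perm 'I_m}) : cancel (bperm t^-1) (bperm t).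
Proof. by move=> B; rewrite -{1}(invgK t) bpermK. Qed.

Lemma eq_bperm (t : {perm 'I_m}) B B' : (bperm t B == B') = (B == bperm t^-1 B').
Proof. by apply/eqP/eqP => [<-|->]; rewrite ?bpermK ?bpermKV. Qed.

Section Anonymity.
Variable f : profile m -> {set {set 'I_m}}.
Hypothesis f_anon : anonymous f.

Lemma anonymous_ballots A : f (profile_of_seq 0 (ballots A)) = f A.
Proof.
set d : seq nat := domf (pmap A).
have ud : uniq d := fset_uniq _.
apply: (f_anon (pi := fun i => nth 0 d i.-1));
  rewrite ?pmap_profile_of_seq ?ballots_neq0 //.
- move=> i j; rewrite !mem_domf_fmap_of_seq size_ballots => /andP[i0 ii] /andP[j0 jj].
  by move/eqP; rewrite nth_uniq -?subn1 // => /eqP; lia.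
- by move=> i; rewrite mem_domf_fmap_of_seq size_ballots subn1 => /andP[_]; apply: mem_nth.
- move=> j jd; exists (index j d).+1; last by rewrite nth_index.
  by rewrite mem_domf_fmap_of_seq size_ballots subSS subn0 index_mem.
- move=> i; rewrite mem_domf_fmap_of_seq size_ballots => /andP[i0 ii].
  by rewrite fnd_fmap_of_seq i0 map_Some_ballots (nth_map 0 _ _ ii) subn1.
Qed.

Lemma anonymous_perm_eq s t :
  perm_eq s t -> f (profile_of_seq 0 s) = f (profile_of_seq 0 t).
Proof.
case: s => [|b s'] pst; first by rewrite perm_sym in pst; rewrite (perm_nilP pst).
set s := b :: s' in pst *.
have [Is pI sE] := perm_iotaP full_ballot pst.
have uI : uniq Is by rewrite (perm_uniq pI) iota_uniq.
have szI : size Is = size t by rewrite (perm_size pI) size_iota.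
have szs : size s = size t by rewrite sE size_map.
have ltI j : j < size Is -> nth 0 Is j < size t.
  by move=> h; have := mem_nth 0 h; rewrite (perm_mem pI) mem_iota.
have tn : t != [::] by rewrite -size_eq0 -szs.
apply: (f_anon (pi := fun i => (nth 0 Is i.-1).+1)); rewrite ?pmap_profile_of_seq //.
- move=> i j; rewrite !mem_domf_fmap_of_seq szs => /andP[i0 ii] /andP[j0 jj].
  by move=> [/eqP]; rewrite -!subn1 nth_uniq ?szI // => /eqP; lia.
- move=> i; rewrite !mem_domf_fmap_of_seq szs subn1 => /andP[i0 ii].
  by rewrite subSS subn0 ltI ?szI.
- move=> j; rewrite mem_domf_fmap_of_seq subn1 => /andP[j0 jj].
  have jI : j.-1 \in Is by rewrite (perm_mem pI) mem_iota.
  exists (index j.-1 Is).+1; last by rewrite nth_index // prednK.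
  by rewrite mem_domf_fmap_of_seq subSS subn0 szs -szI index_mem.
- move=> i; rewrite mem_domf_fmap_of_seq szs subn1 => /andP[i0 ii].
  rewrite !fnd_fmap_of_seq i0 ltn0Sn subSS subn0 subn1.
  by rewrite !(nth_map full_ballot) ?ltI ?szI ?szs // sE (nth_map 0) ?szI.
Qed.

Lemma anonymous_vote_count A A' : vote_count A =1 vote_count A' -> f A = f A'.
Proof.
move=> eqAA'; rewrite -anonymous_ballots -(anonymous_ballots A').
by apply/anonymous_perm_eq/allP => B _; rewrite /= -!vote_countE eqAA'.
Qed.
End Anonymity.
End BallotProfiles.


Section QvecCounts.
Variable m : nat.
Local Open Scope ring_scope.

Definition scaled_counts (v : qvec m) (d c : nat) (u : {ffun ballot m -> nat}) :=
  [/\ (0 < d)%N, (0 < c)%N, (forall B, 0 < u B)%N &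
      forall B, (u B)%:R = d%:R * v B + c%:R :> rat].

Definition qvec_den (v : qvec m) : int := \prod_B denq (v B).

Definition qvec_num (v : qvec m) B : int := (\prod_(B' | B' != B) denq (v B')) * numq (v B).

Definition qvec_shift (v : qvec m) : nat := (\sum_B `|qvec_num v B|).+1.

Definition qvec_counts (v : qvec m) : {ffun ballot m -> nat} :=
  [ffun B => absz (qvec_num v B + (qvec_shift v)%:Z)].

Lemma qvec_numE v B : (qvec_num v B)%:~R = (qvec_den v)%:~R * v B :> rat.
Proof.
rewrite /qvec_num /qvec_den intrM numqE [X in _ = X%:~R * _](bigD1 B) //= intrM.
ring.
Qed.

Lemma scaled_qvec_counts v : scaled_counts v `|qvec_den v| (qvec_shift v) (qvec_counts v).
Proof.
have den_gt0 : 0 < qvec_den v by apply: prodr_gt0 => B _; exact: denq_gt0.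
have num_lt B : (`|qvec_num v B| < qvec_shift v)%N.
  by rewrite ltnS /qvec_shift (bigD1 B) //= leq_addr.
split=> // [|B|B]; rewrite ?ffunE.
- by rewrite absz_gt0 lt0r_neq0.
- by rewrite absz_gt0; have := num_lt B; apply: contraTN => /eqP h; lia.
- rewrite natr_absz ger0_norm; last by have := num_lt B; lia.
  by rewrite intrD qvec_numE natr_absz gtr0_norm.
Qed.
End QvecCounts.

Section InducedRule.
Variables (m k : nat) (f : profile m -> {set {set 'I_m}}).
Hypothesis m_gt0 : 0 < m.
Hypothesis f_anon : anonymous f.
Hypothesis f_neut : neutral f.
Hypothesis f_cons : consistent f.
Hypothesis f_abc : is_ABC_rule k f.
Implicit Types (u : {ffun ballot m -> nat}) (A : profile m).

Definition seq_of_counts (u : {ffun ballot m -> nat}) : seq (ballot m) :=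
  flatten [seq nseq (u B) B | B <- enum {: ballot m}].

Lemma count_seq_of_counts u B : count_mem B (seq_of_counts u) = u B.
Proof.
rewrite count_flatten -map_comp sumnE big_map big_enum /=.
rewrite (bigD1 B) //= count_nseq /= eqxx mul1n big1 ?addn0 // => B' B'B.
by rewrite count_nseq /= (negbTE B'B).
Qed.

Lemma seq_of_counts_neq0 u B : 0 < u B -> seq_of_counts u != [::].
Proof. by rewrite -count_seq_of_counts; case: (seq_of_counts u). Qed.

(* For [u = 0] this is [f] at the junk profile of [profile_of_seq]. *)
Definition fcount u := f (profile_of_seq m_gt0 0 (seq_of_counts u)).

Lemma fcount_vote_count u A : vote_count A =1 u -> fcount u = f A.
Proof.
move=> uA; have [B AB] := vote_count_gt0 A.
have sn : seq_of_counts u != [::] by apply: (@seq_of_counts_neq0 _ B); rewrite -uA.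
apply: anonymous_vote_count => // B'.
by rewrite vote_count_profile_of_seq // count_seq_of_counts uA.
Qed.

Lemma fcountD u u' B B' : 0 < u B -> 0 < u' B' -> fcount u :&: fcount u' != set0 ->
  fcount [ffun B => (u B + u' B)%N] = fcount u :&: fcount u'.
Proof.
move=> /seq_of_counts_neq0 sn /seq_of_counts_neq0 sn' meet.
set s := seq_of_counts u; set s' := seq_of_counts u'.
have ss'n : s ++ s' != [::] by case: (s) sn.
rewrite (fcount_vote_count (A := profile_of_seq m_gt0 0 (s ++ s'))); last first.
  by move=> B''; rewrite vote_count_profile_of_seq // count_cat !count_seq_of_counts ffunE.
rewrite (fcount_vote_count (u := u') (A := profile_of_seq m_gt0 (size s) s')) in meet *;
  last by move=> B''; rewrite vote_count_profile_of_seq // count_seq_of_counts.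
apply: f_cons meet; split; last by rewrite !pmap_profile_of_seq // fmap_of_seq_cat.
apply/fdisjointP => i; rewrite !pmap_profile_of_seq // !mem_domf_fmap_of_seq.
by rewrite -/s => /andP[_ ?]; apply/negP => /andP[? _]; lia.
Qed.

Lemma fcount_perm u B0 (t : {perm 'I_m}) : 0 < u B0 ->
  fcount [ffun B => u (bperm t^-1 B)] = [set t @: W | W : {set 'I_m} in fcount u].
Proof.
move=> /seq_of_counts_neq0 sn.
have tsn : map (bperm t) (seq_of_counts u) != [::] by case: (seq_of_counts u) sn.
rewrite (fcount_vote_count (A := profile_of_seq m_gt0 0 (map (bperm t) (seq_of_counts u)))).
  apply: f_neut; split => [|i]; rewrite !pmap_profile_of_seq //; last exact: fnd_fmap_of_seq_map.
  by apply/fsetP => i; rewrite -!fndSome fnd_fmap_of_seq_map; case: (_.[? i]).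
move=> B; rewrite vote_count_profile_of_seq // count_map ffunE -count_seq_of_counts.
by apply: eq_count => B' /=; rewrite eq_bperm.
Qed.

Definition committees := [set W : {set 'I_m} | #|W| == k].

Lemma fcount_committees u : fcount u \subset committees /\ fcount u != set0.
Proof.
have [neq0 isW] := f_abc (profile_of_seq m_gt0 0 (seq_of_counts u)).
by split=> //; apply/subsetP => W /isW; rewrite inE => ->.
Qed.

Lemma fcount_const c : 0 < c -> fcount [ffun => c] = committees.
Proof.
move=> c_gt0; apply/eqP; rewrite eqEsubset (proj1 (fcount_committees _)) /=.
have X_closed (t : {perm 'I_m}) V : V \in fcount [ffun => c] -> t @: V \in fcount [ffun => c].
  have c_fixed : [ffun B => [ffun => c] (bperm t^-1 B)] = [ffun => c] :> {ffun _ -> nat}.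
    by apply/ffunP => B; rewrite !ffunE.
  move=> VX; rewrite -c_fixed (fcount_perm (B0 := full_ballot m_gt0)) ?ffunE //.
  exact: imset_f.
have [W0 W0X] := set0Pn _ (proj2 (fcount_committees [ffun => c])).
have := subsetP (proj1 (fcount_committees _)) _ W0X; rewrite inE => /eqP cardW0.
apply/subsetP => W; rewrite inE => /eqP cardW.
by apply: (perm_closed_card_mem X_closed W0X); rewrite cardW cardW0.
Qed.

Lemma fcount_addc u B0 c : 0 < u B0 -> 0 < c -> fcount [ffun B => (u B + c)%N] = fcount u.
Proof.
move=> u_gt0 c_gt0; have [sub neq0] := fcount_committees u.
have meet : fcount u :&: fcount [ffun => c] = fcount u.
  by rewrite fcount_const //; apply/setIidPl.
rewrite -meet -(fcountD (B := B0) (B' := B0)) ?meet ?ffunE //.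
by congr fcount; apply/ffunP => B; rewrite !ffunE.
Qed.

Lemma fcount_muln u B0 a : 0 < u B0 -> 0 < a -> fcount [ffun B => a * u B] = fcount u.
Proof.
move=> u_gt0; case: a => // a _; elim: a => [|a IH].
  by congr fcount; apply/ffunP => B; rewrite ffunE mul1n.
have -> : [ffun B => a.+2 * u B] = [ffun B => (a.+1 * u B + u B)%N].
  by apply/ffunP => B; rewrite !ffunE mulSn addnC.
have := fcountD (B := B0) (B' := B0) (u := [ffun B => a.+1 * u B]) (u' := u).
rewrite ffunE muln_gt0 u_gt0 IH setIid (proj2 (fcount_committees u)) => /(_ isT isT isT) <-.
by congr fcount; apply/ffunP => B; rewrite !ffunE.
Qed.

Lemma fcount_affine u B0 a c : 0 < u B0 -> 0 < a -> 0 < c ->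
  fcount [ffun B => (a * u B + c)%N] = fcount u.
Proof.
move=> u_gt0 a_gt0 c_gt0.
have -> : [ffun B => (a * u B + c)%N] = [ffun B => ([ffun B => a * u B] B + c)%N].
  by apply/ffunP => B; rewrite !ffunE.
by rewrite (fcount_addc (B0 := B0)) ?ffunE ?muln_gt0 ?u_gt0 ?a_gt0 // (fcount_muln (B0 := B0)).
Qed.

Lemma fcount_scaled_counts_eq v d1 c1 u1 d2 c2 u2 :
  scaled_counts v d1 c1 u1 -> scaled_counts v d2 c2 u2 -> fcount u1 = fcount u2.
Proof.
move=> [d1_gt0 c1_gt0 u1_gt0 u1E] [d2_gt0 c2_gt0 u2_gt0 u2E].
pose B0 := full_ballot m_gt0.
have same_counts : [ffun B => (d2 * u1 B + d1 * c2)%N] = [ffun B => (d1 * u2 B + d2 * c1)%N].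
  apply/ffunP => B; rewrite !ffunE; apply/eqP; rewrite -(eqr_nat rat).
  by rewrite !natrD !natrM u1E u2E; apply/eqP; ring.
rewrite -(@fcount_affine u1 B0 d2 (d1 * c2)) ?muln_gt0 ?d1_gt0 //.
by rewrite same_counts (@fcount_affine u2 B0) ?muln_gt0 ?d2_gt0.
Qed.

Definition frat (v : qvec m) := fcount (qvec_counts v).

Lemma frat_scaled_counts v d c u : scaled_counts v d c u -> frat v = fcount u.
Proof. exact: fcount_scaled_counts_eq (scaled_qvec_counts v). Qed.

Lemma frat_perm (t : {perm 'I_m}) v :
  frat (vperm t v) = [set t @: W | W : {set 'I_m} in frat v].
Proof.
have [d_gt0 c_gt0 u_gt0 uE] := scaled_qvec_counts v.
rewrite -(fcount_perm t (u_gt0 (full_ballot m_gt0))).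
apply: (@frat_scaled_counts _ `|qvec_den v| (qvec_shift v)).
by split=> // B; rewrite (ffunE (fun B => qvec_counts v _)) ?u_gt0 // uE ffunE.
Qed.

Lemma frat_vadd_scaled v v' d c u d' c' u' :
  scaled_counts v d c u -> scaled_counts v' d' c' u' ->
  fcount u :&: fcount u' != set0 -> frat (vadd v v') = fcount u :&: fcount u'.
Proof.
move=> [d_gt0 c_gt0 u_gt0 uE] [d'_gt0 c'_gt0 u'_gt0 u'E] meet.
pose B0 := full_ballot m_gt0.
have d'u : fcount [ffun B => d' * u B] = fcount u := fcount_muln (u_gt0 B0) d'_gt0.
have du' : fcount [ffun B => d * u' B] = fcount u' := fcount_muln (u'_gt0 B0) d_gt0.
rewrite -d'u -du' in meet *.
rewrite -(fcountD (B := B0) (B' := B0)) ?ffunE ?muln_gt0 ?u_gt0 ?u'_gt0 ?d_gt0 ?d'_gt0 //.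
apply: (@frat_scaled_counts _ (d * d') (c * d' + c' * d)); split=> [||B|B].
- by rewrite muln_gt0 d_gt0.
- by rewrite addn_gt0 muln_gt0 c_gt0 d'_gt0.
- by rewrite !ffunE addn_gt0 muln_gt0 d'_gt0 u_gt0.
- by rewrite !ffunE !natrD !natrM uE u'E; ring.
Qed.

Lemma frat_vadd v v' : frat v :&: frat v' != set0 -> frat (vadd v v') = frat v :&: frat v'.
Proof. exact: frat_vadd_scaled (scaled_qvec_counts v) (scaled_qvec_counts v'). Qed.

Lemma frat_count_vec A : frat (count_vec A) = f A.
Proof.
have [B0 AB0] := vote_count_gt0 A.
rewrite (@frat_scaled_counts _ 1 1 [ffun B => (vote_count A B + 1)%N]).
  by rewrite (fcount_addc (B0 := B0)) // (fcount_vote_count (A := A)).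
by split=> // B; rewrite !ffunE ?addn1 // mul1r -addn1 natrD.
Qed.
End InducedRule.

Theorem mainTheorem7 (m k : nat) (f : profile m -> {set {set 'I_m}}) :
  2 <= m -> 1 <= k <= m.-1 ->
  is_ABC_rule k f -> non_imposing k f ->
  anonymous f -> neutral f -> consistent f ->
  exists g : qvec m -> {set {set 'I_m}},
    (forall v, abc_rule_out k (g v)) /\
    (forall (t : {perm 'I_m}) (v : qvec m),
        g (vperm t v) = ([set t @: W | W : {set 'I_m} in g v])%SET) /\
    (forall v v' : qvec m, g v :&: g v' != set0 ->
        g (vadd v v') = g v :&: g v') /\
    (forall A : profile m, g (count_vec A) = f A).
Proof.
move=> m_ge2 _ f_abc _ f_anon f_neut f_cons.
have m_gt0 : 0 < m by apply: ltnW.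
exists (frat f m_gt0); split; [|split; [|split]].
- by move=> v; apply: f_abc.
- exact: frat_perm.
- exact: frat_vadd.
- exact: frat_count_vec.
Qed.
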